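(* Let $n\ge3$ be odd, let $d,R\in\mathbb{Z}$ with $d\ne0$, $R$ not a square, $\gcd(d,R)=1$, and $D=d^2-R$. Suppose that for each prime divisor $p$ of $n$ there is a prime $q\ge3$ such that $v_q(D)$ is odd and $v_q(D)\not\equiv0\pmod p$. Then $f_n=f_n(Z,d,R)$ is irreducible in $\mathbb{Q}[Z]$.
   Context: $v_q$ denotes the $q$-adic valuation on $\mathbb{Q}\setminus\{0\}$. $f_n(Z,d,R)=\sum_{j=0}^{(n-1)/2}(-1)^j\frac{n}{n-j}\binom{n-j}{j}D^jZ^{n-2j}-2dD^{(n-1)/2}$, which equals $\sqrt D^{\,n}F_n(Z/\sqrt D)-2dD^{(n-1)/2}$ where $F_n(Z)=2T_n(Z/2)$ and $T_n$ is the Chebyshev polynomial of the first kind. *)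

From HB Require Import structures.
From mathcomp Require Import all_boot all_order all_algebra.
Set Implicit Arguments. Unset Strict Implicit. Unset Printing Implicit Defensive.
Import Order.TTheory GRing.Theory Num.Theory.
Local Open Scope ring_scope.

Definition Dval (d R : int) : int := d ^+ 2 - R.

Definition vq (q : nat) (z : int) : nat := logn q `|z|%N.

Definition f_poly (n : nat) (d R : int) : {poly rat} :=
  let D : rat := (Dval d R)%:~R in
  \sum_(j < (n.-1)./2.+1)
     (((-1) ^+ j * (n%:R / (n - j)%N%:R) * ('C((n - j)%N, j))%:R * D ^+ j)
        *: 'X^((n - 2 * j)%N))
  - (2 * d%:~R * D ^+ (n.-1)./2)%:P.

From HB Require Import structures.
From mathcomp Require Import all_boot all_order all_algebra.
From mathcomp Require Import zify ring.
Import Order.TTheory GRing.Theory Num.Theory.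
Local Open Scope ring_scope.

(* Irreducibility of f_n(Z,d,R) by a q-adic Newton polygon argument.

   Clearing the denominators n/(n-j) shows that f_n is the image of a monic
   integer polynomial F of degree n ([f_polyE]): the coefficient of Z^(n-2j) is
   (-1)^j (C(n-j,j) + C(n-j-1,j-1)) D^j and the constant term is -2 d D^h, with
   h = (n-1)/2.  By Gauss's lemma ([irreducible_map_int]) it suffices to rule
   out factorizations F = G r over Z with 0 < deg G = k < n.

   For a prime q >= 3 dividing D and not d, v_q(F_0) = h v_q(D) while
   v_q(F_(n-2j)) >= j v_q(D): the q-adic Newton polygon of F is the single
   segment from (0, h v_q(D)) to (n, 0).  The general lemma
   [single_slope_factor] then forces n v_q(G_0) = k h v_q(D); it rests on the
   product formula [coefM_first_argmin] for the weighted valuation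
   min_i (a v_q(P_i) + i b) of a polynomial P.  For each prime p | n the
   hypothesis provides such a q with p coprime to v_q(D), and p is coprime to
   h because gcd(n, h) = 1; so the p-part of n divides k.  Hence n | k, which
   is impossible. *)

Lemma vqM q (a b : int) : a != 0 -> b != 0 -> vq q (a * b) = (vq q a + vq q b)%N.
Proof. by move=> a0 b0; rewrite /vq abszM lognM // absz_gt0. Qed.

Lemma vqN q (a : int) : vq q (- a) = vq q a.
Proof. by rewrite /vq abszN. Qed.

Lemma vqX q k (a : int) : vq q (a ^+ k) = (k * vq q a)%N.
Proof. by rewrite /vq abszX lognX. Qed.

Lemma vq_dvd q e (a : int) : prime q -> a != 0 ->
  ((q ^ e)%:Z %| a)%Z = (e <= vq q a)%N.
Proof. by move=> q_pr a0; rewrite dvdzE /vq /= pfactor_dvdn // absz_gt0. Qed.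

Lemma vq_unit q (a b : int) : a * b = 1 -> vq q a = 0%N.
Proof.
move=> ab1; have /eqP : (`|a| * `|b| = 1)%N by rewrite -abszM ab1.
by rewrite muln_eq1 => /andP[/eqP a1 _]; rewrite /vq a1 logn1.
Qed.

Lemma vq_indivisible q (a : int) : prime q -> ~~ (q %| `|a|)%N -> vq q a = 0%N.
Proof. by move=> q_pr nqa; rewrite /vq logn_coprime // prime_coprime. Qed.

Lemma vq_exact q e (a : int) : prime q ->
  ((q ^ e)%:Z %| a)%Z -> ~~ ((q ^ e.+1)%:Z %| a)%Z -> a != 0 /\ vq q a = e.
Proof.
move=> q_pr qe_a qe1_a; have a0 : a != 0 by apply: contraNneq qe1_a => ->.
split=> //; apply/eqP; rewrite eqn_leq -vq_dvd // qe_a andbT.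
by move: qe1_a; rewrite vq_dvd // -ltnNge.
Qed.

Definition first_argmin (P : {poly int}) (w : nat -> nat) (i : nat) : Prop :=
  [/\ P`_i != 0, forall j, P`_j != 0 -> (w i <= w j)%N
    & forall j, (j < i)%N -> P`_j != 0 -> (w i < w j)%N].

(* Every nonzero polynomial has such an index: minimise w j * size P + j. *)
Lemma first_argminP (P : {poly int}) (w : nat -> nat) :
  P != 0 -> exists i, first_argmin P w i.
Proof.
move=> P0; set s := size P.
have coef_lt j : P`_j != 0 -> (j < s)%N.
  by apply: contraR; rewrite -leqNgt => /(nth_default 0) ->.
pose key (j : nat) := (w j * s + j)%N.
have has_key : exists k, [exists j : 'I_s, (P`_j != 0) && (key j == k)].
  exists (key s.-1); apply/existsP.
  have ls : (s.-1 < s)%N by rewrite prednK // size_poly_gt0.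
  by exists (Ordinal ls); rewrite /= eqxx andbT -lead_coefE lead_coef_eq0.
case: (ex_minnP has_key) => _ /existsP[i /andP[Pi /eqP <-]] min_key.
have key_le j : P`_j != 0 -> (key i <= key j)%N.
  move=> Pj; apply: min_key; apply/existsP.
  by exists (Ordinal (coef_lt j Pj)); rewrite Pj eqxx.
have i_lt := ltn_ord i.
exists i; split=> // [j Pj | j ji Pj]; have := key_le j Pj; have := coef_lt j Pj;
  rewrite /key; nia.
Qed.

Section WeightedValuation.
Variables (q a b : nat).
Hypothesis q_prime : prime q.

(* The weight of the point (i, v_q(P_i)) of the Newton diagram of [P] in the
   direction of slope -b/a: points on a segment of that slope share a weight. *)
Definition weight (P : {poly int}) (i : nat) : nat := (a * vq q P`_i + i * b)%N.

(* Product formula for the weighted valuation: at the sum of the first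
   minimising indices of [G] and [r], the coefficient of [G * r] is nonzero and
   its weight is the sum of the minimal weights, since all other terms of the
   convolution are divisible by a higher power of q. *)
Lemma coefM_first_argmin (G r : {poly int}) (iG iR : nat) :
  first_argmin G (weight G) iG -> first_argmin r (weight r) iR ->
  (G * r)`_(iG + iR) != 0 /\
  weight (G * r) (iG + iR) = (weight G iG + weight r iR)%N.
Proof.
case=> GiG minG firstG [riR minr firstr].
set m := (iG + iR)%N; set e := (vq q G`_iG + vq q r`_iR)%N.
have weight_min : (weight G iG + weight r iR = a * e + m * b)%N.
  by rewrite /weight /e /m; ring.
have weight_pair j : (j <= m)%N ->
    (weight G j + weight r (m - j) = a * (vq q G`_j + vq q r`_(m - j)) + m * b)%N.
  by move=> jm; rewrite /weight addnACA -mulnDr -mulnDl subnKC.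
(* Any other pair of indices summing to m has a strictly larger total weight,
   hence a product of strictly larger valuation. *)
have other_terms j : (j <= m)%N -> j != iG ->
    ((q ^ e.+1)%:Z %| G`_j * r`_(m - j))%Z.
  move=> jm j_iG.
  have [->|Tj] := eqVneq (G`_j * r`_(m - j)) 0; first exact: dvdz0.
  have Gj : G`_j != 0 by apply: contraNneq Tj => ->; rewrite mul0r.
  have rj : r`_(m - j) != 0 by apply: contraNneq Tj => ->; rewrite mulr0.
  have lt_weight : (weight G iG + weight r iR < weight G j + weight r (m - j))%N.
    case: (ltngtP j iG) j_iG => [ji|ij|/eqP //] _.
      by have := firstG _ ji Gj; have := minr _ rj; lia.
    have mj : (m - j < iR)%N by move: jm; rewrite /m; lia.
    by have := firstr _ mj rj; have := minG _ Gj; lia.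
  rewrite vq_dvd // vqM //; move: lt_weight.
  by rewrite weight_min weight_pair // ltn_add2r ltn_mul2l => /andP[].
have [main_dvd main_ndvd] : ((q ^ e)%:Z %| G`_iG * r`_iR)%Z /\
    ~~ ((q ^ e.+1)%:Z %| G`_iG * r`_iR)%Z.
  by rewrite !vq_dvd ?mulf_neq0 // vqM // leqnn ltnn.
have iG_lt : (iG < m.+1)%N by rewrite ltnS leq_addr.
have rest_dvd : ((q ^ e.+1)%:Z %|
    \sum_(j < m.+1 | j != Ordinal iG_lt) G`_j * r`_(m - j))%Z.
  apply: rpred_sum => j j_iG; apply: other_terms; first by rewrite -ltnS.
  by apply: contra j_iG => /eqP j_iG; apply/eqP/val_inj.
have [coef_m0 coef_mE] : (G * r)`_m != 0 /\ vq q (G * r)`_m = e.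
  have m_iG : (m - iG)%N = iR by rewrite /m addKn.
  rewrite coefM (bigD1 (Ordinal iG_lt)) //= m_iG.
  apply: vq_exact => //.
    apply: rpredD => //; apply: dvdz_trans rest_dvd.
    by rewrite dvdzE /= dvdn_exp2l.
  by apply: contra main_ndvd => /rpredB /(_ rest_dvd); rewrite addrK.
by split=> //; rewrite weight_min /weight coef_mE.
Qed.

End WeightedValuation.

(* If the Newton polygon of [F = G * r] is the single segment from (0, V) to
   (n, 0) and the leading coefficients of the factors are q-adic units, then
   the constant term of the degree-k factor [G] lies on the same line:
   v_q(G_0) = k V / n. *)
Lemma single_slope_factor (q n V k : nat) (F G r : {poly int}) :
  prime q -> F = G * r -> size G = k.+1 -> size r = (n - k).+1 -> (k <= n)%N ->
  vq q (lead_coef G) = 0%N -> vq q (lead_coef r) = 0%N ->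
  F`_0 != 0 -> vq q F`_0 = V ->
  (forall i, F`_i != 0 -> (n * V <= n * vq q F`_i + i * V)%N) ->
  (n * vq q G`_0 = k * V)%N.
Proof.
move=> q_pr FE sG sr kn lG lr F00 vF0 above_line.
have G0 : G != 0 by rewrite -size_poly_gt0 sG.
have r0 : r != 0 by rewrite -size_poly_gt0 sr.
have F0E : F`_0 = G`_0 * r`_0 by rewrite FE coef0M.
have G00 : G`_0 != 0 by apply: contraNneq F00; rewrite F0E => ->; rewrite mul0r.
have r00 : r`_0 != 0 by apply: contraNneq F00; rewrite F0E => ->; rewrite mulr0.
have vF0E : (vq q G`_0 + vq q r`_0)%N = V by rewrite -vqM // -F0E.
have [iG argG] := first_argminP G (weight q n V G) G0.
have [iR argr] := first_argminP r (weight q n V r) r0.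
have [Fm0 FmE] := @coefM_first_argmin q n V q_pr _ _ _ _ argG argr.
rewrite -FE in Fm0 FmE.
case: argG argr => _ minG _ [_ minr _].
have weight0 (P : {poly int}) : weight q n V P 0 = (n * vq q P`_0)%N.
  by rewrite /weight mul0n addn0.
have w_G0 : (weight q n V G iG <= n * vq q G`_0)%N by rewrite -weight0 minG.
have w_r0 : (weight q n V r iR <= n * vq q r`_0)%N by rewrite -weight0 minr.
have w_Gk : (weight q n V G iG <= k * V)%N.
  have Gk : G`_k = lead_coef G by rewrite lead_coefE sG.
  have -> : (k * V)%N = weight q n V G k by rewrite /weight Gk lG muln0.
  by rewrite minG // Gk lead_coef_eq0.
have w_rk : (weight q n V r iR <= (n - k) * V)%N.
  have rk : r`_(n - k) = lead_coef r by rewrite lead_coefE sr.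
  have -> : ((n - k) * V)%N = weight q n V r (n - k) by rewrite /weight rk lr muln0.
  by rewrite minr // rk lead_coef_eq0.
have on_line :
    (n * vq q G`_0 + n * vq q r`_0 <= weight q n V G iG + weight q n V r iR)%N.
  by rewrite -mulnDr vF0E -FmE; exact: above_line.
have split_V : (k * V + (n - k) * V = n * vq q G`_0 + n * vq q r`_0)%N.
  by rewrite -mulnDl subnKC // -mulnDr vF0E.
lia.
Qed.

(* The integer n/(n-j) C(n-j, j) = C(n-j, j) + C(n-j-1, j-1) ([bcoefE]). *)
Definition bcoef (n j : nat) : nat :=
  ('C(n - j, j) + (if j is j'.+1 then 'C((n - j).-1, j') else 0))%N.

Lemma bcoefE n j : (j <= n)%N -> ((n - j) * bcoef n j = n * 'C(n - j, j))%N.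
Proof.
rewrite /bcoef mulnDr; case: j => [|j] jn; first by rewrite !subn0 muln0 addn0 bin0.
by rewrite mul_bin_diag -mulnDl subnK.
Qed.

Definition FZ (n : nat) (d R : int) : {poly int} :=
  let D := Dval d R in
  \sum_(j < (n.-1)./2.+1) (((-1) ^+ j * (bcoef n j)%:Z * D ^+ j) *: 'X^(n - 2 * j))
  - (2 * d * D ^+ (n.-1)./2)%:P.

Lemma f_polyE n d R : (0 < n)%N -> f_poly n d R = map_poly intr (FZ n d R).
Proof.
move=> n_gt0; rewrite /f_poly /FZ [RHS]raddfB raddf_sum /= map_polyC /=.
congr (_ - _); last by rewrite !rmorphM rmorphXn.
apply: eq_bigr => j _; rewrite map_polyZ /= map_polyXn.
have jn : (j < n)%N by have := ltn_ord j; lia.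
have nj0 : ((n - j)%N%:R : rat) != 0 by rewrite pnatr_eq0 subn_eq0 -ltnNge.
have binE : ((bcoef n j)%:R : rat) = n%:R / (n - j)%N%:R * 'C(n - j, j)%:R.
  apply: (mulfI nj0); rewrite -natrM bcoefE 1?ltnW // natrM; field.
  exact: nj0.
congr (_ *: _); rewrite !rmorphM !rmorphXn rmorphN1 /=.
by have -> : ((bcoef n j)%:Z%:~R : rat) = (bcoef n j)%:R by []; rewrite binE !mulrA.
Qed.

Section FZCoefficients.
Variables (n : nat) (d R : int).
Hypothesis n_odd : odd n.
Local Notation h := (n.-1)./2.
Local Notation D := (Dval d R).
Local Notation F := (FZ n d R).

Lemma odd_halfE : n = h.*2.+1.
Proof. lia. Qed.

Lemma FZ_coef i : F`_i =
  \sum_(j < h.+1) ((-1) ^+ j * (bcoef n j)%:Z * D ^+ j) * (i == n - 2 * j)%N%:R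
  - (2 * d * D ^+ h) * (i == 0)%N%:R.
Proof.
rewrite /FZ coefB coef_sum coefC; congr (_ - _).
  by apply: eq_bigr => j _; rewrite coefZ coefXn.
by case: (i == 0)%N; rewrite ?mulr1 ?mulr0.
Qed.

Lemma FZ_coef0 : F`_0 = - (2 * d * D ^+ h).
Proof.
rewrite FZ_coef big1 ?sub0r ?mulr1 // => j _.
by have := ltn_ord j; have := odd_halfE; case: eqP; rewrite ?mulr0 //; lia.
Qed.

Lemma FZ_coefn : F`_n = 1.
Proof.
have n0 : (n == 0)%N = false by lia.
rewrite FZ_coef n0 mulr0 subr0 (bigD1 ord0) //= big1 ?addr0.
  by rewrite subn0 eqxx expr0 mul1r mulr1 /bcoef subn0 bin0.
move=> j j0; have j_gt0 : (0 < j)%N.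
  by rewrite lt0n; apply: contraNneq j0 => jz; apply/eqP/val_inj.
by have := ltn_ord j; have := odd_halfE; case: eqP; rewrite ?mulr0 //; lia.
Qed.

Lemma size_FZ : size F = n.+1.
Proof.
apply/anti_leq/andP; split; last first.
  by rewrite ltnNge; apply/negP => /leq_sizeP/(_ n (leqnn n)); rewrite FZ_coefn.
apply/leq_sizeP => i ni; rewrite FZ_coef big1 => [|j _].
  by rewrite (_ : (i == 0)%N = false) ?mulr0 ?subr0 //; lia.
by rewrite (_ : (i == n - 2 * j)%N = false) ?mulr0 //; lia.
Qed.

Lemma lead_FZ : lead_coef F = 1.
Proof. by rewrite lead_coefE size_FZ FZ_coefn. Qed.

Lemma FZ_coef_dvd i : (0 < i)%N -> F`_i != 0 ->
  exists2 j, (j <= h)%N & i = (n - 2 * j)%N /\ (D ^+ j %| F`_i)%Z.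
Proof.
move=> i_gt0; rewrite FZ_coef (_ : (i == 0)%N = false) ?mulr0 ?subr0; last by lia.
have [j /eqP ij | no_j] := pickP (fun j : 'I_h.+1 => i == n - 2 * j)%N; last first.
  by rewrite big1 ?eqxx // => j _; rewrite no_j mulr0.
move=> _; exists j; first by rewrite -ltnS.
split=> //; apply: rpred_sum => j' _.
have [ij'|_] := eqVneq i (n - 2 * j')%N; last by rewrite mulr0 dvdz0.
have -> : j' = j.
  by apply/val_inj => /=; have := odd_halfE; move: ij ij' (ltn_ord j) (ltn_ord j'); lia.
by rewrite mulr1 dvdz_mull.
Qed.

(* For a prime q >= 3 dividing D but not d, the q-adic Newton polygon of F is
   a single segment, so a factor G of degree k with unit leading coefficient
   satisfies n v_q(G_0) = k h v_q(D). *)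
Lemma FZ_factor_valuation q k (G r : {poly int}) :
  prime q -> (2 < q)%N -> ~~ (q %| `|d|)%N -> (0 < vq q D)%N ->
  F = G * r -> size G = k.+1 -> size r = (n - k).+1 -> (k <= n)%N ->
  vq q (lead_coef G) = 0%N -> vq q (lead_coef r) = 0%N ->
  (n * vq q G`_0 = k * (h * vq q D))%N.
Proof.
move=> q_pr q_gt2 q_nd vD_gt0 FE sG sr kn lG lr.
have above_segment j v : (j <= h)%N ->
    (n * (h * v) <= n * (j * v) + (n - 2 * j) * (h * v))%N.
  by move: (h) odd_halfE => m -> jm; nia.
have D0 : D != 0 by apply: contraTneq vD_gt0 => ->; rewrite /vq logn0.
have d0 : d != 0 by apply: contraNneq q_nd => ->; rewrite dvdn0.
have F00 : F`_0 != 0 by rewrite FZ_coef0 oppr_eq0 !mulf_neq0 ?expf_neq0.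
have vF0 : vq q F`_0 = (h * vq q D)%N.
  have v2 : vq q 2 = 0%N by apply: vq_indivisible => //; apply/negP => /dvdn_leq; lia.
  by rewrite FZ_coef0 vqN !vqM ?mulf_neq0 ?expf_neq0 // v2 vq_indivisible // vqX.
apply: (single_slope_factor _ _ _ _ _ _ _ q_pr FE sG sr kn lG lr F00 vF0) => i Fi.
have [->|i_gt0] := posnP i; first by rewrite vF0 mul0n addn0.
have [j jh [iE Dj_dvd]] := FZ_coef_dvd _ i_gt0 Fi.
have vFi : (j * vq q D <= vq q F`_i)%N.
  by rewrite -vq_dvd // -vqX; apply: dvdz_trans Dj_dvd; rewrite vq_dvd ?expf_neq0.
apply: leq_trans (above_segment j (vq q D) jh) _.
by apply: leq_add; [rewrite leq_mul2l vFi orbT | rewrite iE].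
Qed.

End FZCoefficients.

Lemma coprime_odd_half n : odd n -> coprime n (n.-1)./2.
Proof.
move=> n_odd; set h := (n.-1)./2; have -> : n = (2 * h + 1)%N by rewrite /h; lia.
by rewrite coprime_sym /coprime gcdnMDl gcdn1.
Qed.

Lemma not_dvd_d q (d R : int) : prime q -> gcdz d R = 1%N ->
  (q%:Z %| Dval d R)%Z -> ~~ (q %| `|d|)%N.
Proof.
move=> q_pr dR_coprime q_D; apply/negP => q_d.
have q_R : (q%:Z %| R)%Z.
  have -> : R = d ^+ 2 - Dval d R by rewrite /Dval opprB addrC subrK.
  by apply: rpredB => //; rewrite expr2 dvdz_mulr.
have : (q%:Z %| gcdz d R)%Z by rewrite dvdz_gcd; apply/andP.
by rewrite dR_coprime dvdzE /= dvdn1 => /eqP q1; rewrite q1 in q_pr.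
Qed.

(* Gauss's lemma: an integer polynomial with no factorization over Z into a
   factor of intermediate size is irreducible over Q. *)
Lemma irreducible_map_int (F : {poly int}) : (1 < size F)%N ->
  (forall G r : {poly int}, F = G * r -> (1 < size G < size F)%N -> False) ->
  irreducible_poly (map_poly (intr : int -> rat) F).
Proof.
move=> sF no_factor; split; first by rewrite size_rat_int_poly.
move=> g sg1 g_dvd; case/dvdpP_rat_int: (g_dvd) => G [a a0 gE] [r FE].
rewrite -dvdp_size_eqp // gE size_scale // !size_rat_int_poly.
move: sg1; rewrite gE size_scale // size_rat_int_poly => sG1.
have F0 : F != 0 by rewrite -size_poly_gt0; apply: ltnW.
have [G0 r0] : G != 0 /\ r != 0.
  by split; apply: contraNneq F0; rewrite FE => ->; rewrite ?mul0r ?mulr0.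
have sG_le : (size G <= size F)%N.
  by rewrite FE size_mul // -subn1 -addnBA ?leq_addr ?size_poly_gt0.
apply/negPn/negP => sGF; apply: (no_factor G r FE).
by rewrite ltn_neqAle eq_sym sG1 size_poly_gt0 G0 /= ltn_neqAle sGF sG_le.
Qed.

(* F has no factorization over Z with a factor of degree k, 0 < k < n: for
   every prime p | n the valuation relation of [FZ_factor_valuation] forces
   the p-part of n to divide k. *)
Lemma FZ_no_proper_factor n d R (G r : {poly int}) :
  odd n -> gcdz d R = 1%N ->
  (forall p, prime p -> (p %| n)%N ->
     exists q, [/\ prime q, (2 < q)%N & ~~ (p %| vq q (Dval d R))%N]) ->
  FZ n d R = G * r -> (1 < size G < size (FZ n d R))%N -> False.
Proof.
move=> n_odd dR_coprime good_q FE; rewrite size_FZ // => /andP[sG_gt1 sG_lt].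
have F0 : FZ n d R != 0 by rewrite -size_poly_gt0 size_FZ.
have [G0 r0] : G != 0 /\ r != 0.
  by split; apply: contraNneq F0; rewrite FE => ->; rewrite ?mul0r ?mulr0.
set k := (size G).-1.
have sG : size G = k.+1 by rewrite /k prednK // size_poly_gt0.
have sr : size r = (n - k).+1.
  have := size_mul G0 r0; rewrite -FE size_FZ // sG addSn /=.
  by move: (size r) sG_lt; rewrite sG /k => s ? ?; lia.
have lGr : lead_coef G * lead_coef r = 1 by rewrite -lead_coefM -FE lead_FZ.
have lrG : lead_coef r * lead_coef G = 1 by rewrite mulrC.
have /andP[k_gt0 k_lt_n] : (0 < k < n)%N by rewrite /k; lia.
have n_dvd_k : (n %| k)%N.
  apply/dvdn_partP => [|p]; first by rewrite odd_gt0.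
  rewrite mem_primes => /and3P[p_pr _ p_n]; rewrite p_part.
  have [q [q_pr q_gt2 p_nd_vD]] := good_q p p_pr p_n.
  have vD_gt0 : (0 < vq q (Dval d R))%N by rewrite lt0n; apply: contraNneq p_nd_vD => ->.
  have D0 : Dval d R != 0 by apply: contraTneq vD_gt0 => ->; rewrite /vq logn0.
  have q_nd : ~~ (q %| `|d|)%N.
    by apply: not_dvd_d dR_coprime _ => //; rewrite -(expn1 q) vq_dvd.
  have := @FZ_factor_valuation n d R n_odd q k G r q_pr q_gt2 q_nd vD_gt0 FE sG sr
    (ltnW k_lt_n) (vq_unit _ _ _ lGr) (vq_unit _ _ _ lrG) => E.
  have cop : coprime (p ^ logn p n) ((n.-1)./2 * vq q (Dval d R)).
    apply: coprimeXl.
    rewrite coprimeMr [coprime p (vq _ _)]prime_coprime // p_nd_vD andbT.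
    by apply: coprime_dvdl p_n _; apply: coprime_odd_half.
  rewrite -(Gauss_dvdl _ cop) -E.
  by apply: dvdn_mulr; apply: pfactor_dvdnn.
by move/dvdn_leq: n_dvd_k => /(_ k_gt0); rewrite leqNgt k_lt_n.
Qed.

Theorem proposition7 (n : nat) (d R : int) :
  (3 <= n)%N -> odd n ->
  d != 0 ->
  ~ (exists m : int, R = m ^+ 2) ->
  gcdz d R = 1%N ->
  (forall p : nat, prime p -> (p %| n)%N ->
     exists q : nat, [/\ prime q, (3 <= q)%N,
                        odd (vq q (Dval d R)) & ~~ (p %| vq q (Dval d R))%N]) ->
  irreducible_poly (f_poly n d R).
Proof.
move=> _ n_odd _ _ dR_coprime good_q.
rewrite f_polyE ?odd_gt0 //; apply: irreducible_map_int => [|G r].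
  by rewrite size_FZ // ltnS odd_gt0.
apply: FZ_no_proper_factor => // p p_pr p_n.
by have [q [q_pr q_ge3 _ p_nd]] := good_q p p_pr p_n; exists q.
Qed.
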